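(* Let $(G',\sigma,G)$ be a left (resp. right) valid triplet, where $\sigma:\mathcal{A}^*\to\mathcal{B}^*$ is a return morphism. For every spanning tree $T'$ of $G'$, there exists a spanning tree $T$ of $G$ such that $(T',\sigma,T)$ is left (resp. right) valid, where spanning trees are regarded as colored trees (each edge having its own color).
   Context: A return morphism for $w\in\mathcal{B}^+$ is an injective non-erasing morphism $\sigma:\mathcal{A}^*\to\mathcal{B}^*$ such that $\sigma(a)w$ contains exactly two occurrences of $w$, a proper prefix and a proper suffix, for each $a\in\mathcal{A}$ ($w$ of maximal length if unspecified). $\mathcal{A}^L_{\sigma,s}=\{a:\sigma(a)\in\mathcal{B}^+s\}$, $\mathcal{A}^R_{\sigma,p}=\{a:\sigma(a)w\in p\mathcal{B}^+\}$; $\varphi^L_{\sigma,s}(a)$ for $a\in\mathcal{A}^L_{\sigma,s}$ is the letter $a'$ with $\sigma(a)\in\mathcal{B}^*a's$; $\varphi^R_{\sigma,p}(b)$ for $b\in\mathcal{A}^R_{\sigma,p}$ is the letter $b'$ with $\sigma(b)w\in pb'\mathcal{B}^*$; $\mathcal{T}^L(\sigma)$ is the set of longest common suffixes of $\sigma(a),\sigma(b)$, $a\ne b$, and $\mathcal{T}^R(\sigma)$ the set of longest common prefixes of $\sigma(a)w,\sigma(b)w$, $a\ne b$. Multi-clique $G(\{C_1,\dots,C_k\})$ on a vertex set $V$: every pair of distinct elements of $C_i$ joined by an edge of color $c_i$, colors distinct; colored multigraphs identified up to a bijection of colors. Acyclic for the coloring: each simple cycle is monochromatic. A colored tree is a multi-clique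 all of whose edges have different colors and whose underlying graph is a tree. For a multigraph $G$ on $\mathcal{A}$, $G^L_{\sigma,s}$ (resp. $G^R_{\sigma,p}$) is its subgraph induced by $\mathcal{A}^L_{\sigma,s}$ (resp. $\mathcal{A}^R_{\sigma,p}$). For $G=G(\{C_1,\dots,C_k\})$ on $\mathcal{A}$: $\sigma^L(G)=G(\{\varphi^L_{\sigma,s}(C_i):i\le k,s\in\mathcal{T}^L(\sigma)\})$, $\sigma^R(G)=G(\{\varphi^R_{\sigma,p}(C_i):i\le k,p\in\mathcal{T}^R(\sigma)\})$ on vertex set $\mathcal{B}$. A triplet $(G',\sigma,G)$ is left valid (resp. right valid) if (1) $G$ is a multi-clique acyclic for the coloring and connected; (2) for all $s\in\mathcal{T}^L(\sigma)$, $G^L_{\sigma,s}$ is connected (resp. for all $p\in\mathcal{T}^R(\sigma)$, $G^R_{\sigma,p}$ is connected); (3) $G'=\sigma^L(G)$ (resp. $G'=\sigma^R(G)$) is a multi-clique acyclic for the coloring and connected. *)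

From mathcomp Require Import all_boot.
Set Implicit Arguments. Unset Strict Implicit. Unset Printing Implicit Defensive.

(* A multi-clique G({C_1,...,C_k}) on a finite vertex set V is represented by
   the list [:: C_1; ...; C_k]; the colour of the edges of C_i is the index i. *)

Definition mc_adj (V : finType) (l : seq {set V}) : rel V :=
  fun u v => has (fun C : {set V} => (u \in C) && (v \in C)) l.

Definition mc_connected (V : finType) (l : seq {set V}) : Prop :=
  forall u v : V, connect (mc_adj l) u v.

Definition mc_connected_on (V : finType) (S : {set V}) (l : seq {set V}) : Prop :=
  forall u v : V, u \in S -> v \in S ->
    connect (fun x y => [&& x \in S, y \in S & mc_adj l x y]) u v.

(* A simple cycle of length n+2: distinct vertices vs 0, ..., vs (n+1), the
   i-th edge joins vs i and vs (i+1 mod n+2) and has colour cs i (so both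
   endpoints lie in clique number cs i).  For length 2 the two edges must be
   distinct, i.e. have distinct colours.  Acyclic for the coloring: every
   simple cycle is monochromatic. *)
Definition mc_cycle (V : finType) (l : seq {set V}) (n : nat)
    (vs : 'I_n.+2 -> V) (cs : 'I_n.+2 -> nat) : Prop :=
  injective vs /\
  (forall i : 'I_n.+2, cs i < size l /\ vs i \in nth set0 l (cs i)
                        /\ vs (ordS i) \in nth set0 l (cs i)) /\
  (n = 0 -> cs ord0 <> cs ord_max).

Definition mc_acyclic (V : finType) (l : seq {set V}) : Prop :=
  forall n (vs : 'I_n.+2 -> V) (cs : 'I_n.+2 -> nat),
    mc_cycle l vs cs -> forall i j, cs i = cs j.

(* equality of coloured multigraphs up to a bijection of colours
   (cliques with < 2 elements carry no edge, hence no colour) *)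
Definition mc_eq (V : finType) (l1 l2 : seq {set V}) : Prop :=
  perm_eq [seq C <- l1 | 1 < #|(C : {set V})|] [seq C <- l2 | 1 < #|(C : {set V})|].

(* colored tree: every colour class is a single edge, underlying graph a tree
   (connected, and without simple cycles) *)
Definition colored_tree (V : finType) (T : seq {set V}) : Prop :=
  all (fun C : {set V} => #|C| == 2) T /\ mc_acyclic T /\ mc_connected T.

Definition spanning_tree (V : finType) (T G : seq {set V}) : Prop :=
  colored_tree T /\ (forall e, e \in T -> has (fun C : {set V} => e \subset C) G).

Definition morph (A B : Type) (sigma : A -> seq B) (u : seq A) : seq B :=
  flatten (map sigma u).

Definition occurrences (B : eqType) (w x : seq B) : seq nat :=
  [seq i <- iota 0 (size x - size w).+1 |
     (size w <= size x) && (take (size w) (drop i x) == w)].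

Definition return_morphism (A : finType) (B : eqType) (sigma : A -> seq B)
    (w : seq B) : Prop :=
  w != [::] /\ injective (morph sigma) /\
  (forall a, sigma a != [::]) /\
  (forall a, occurrences w (sigma a ++ w) = [:: 0; size (sigma a)]).

Fixpoint lcp (T : eqType) (u v : seq T) : seq T :=
  match u, v with
  | x :: u', y :: v' => if x == y then x :: lcp u' v' else [::]
  | _, _ => [::]
  end.

Definition lcs (T : eqType) (u v : seq T) : seq T := rev (lcp (rev u) (rev v)).

Section Sets.
Variables (A B : finType) (sigma : A -> seq B) (w : seq B).

Definition TL : seq (seq B) :=
  undup [seq lcs (sigma p.1) (sigma p.2) | p in [pred p : A * A | p.1 != p.2]].
Definition TR : seq (seq B) :=
  undup [seq lcp (sigma p.1 ++ w) (sigma p.2 ++ w)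
        | p in [pred p : A * A | p.1 != p.2]].

Definition AL (s : seq B) : {set A} :=
  [set a | suffix s (sigma a) && (size s < size (sigma a))].
Definition AR (p : seq B) : {set A} :=
  [set a | prefix p (sigma a ++ w) && (size p < size (sigma a ++ w))].

Definition phiL (s : seq B) (C : {set A}) : {set B} :=
  [set b | [exists a in C, suffix (b :: s) (sigma a)]].
Definition phiR (p : seq B) (C : {set A}) : {set B} :=
  [set b | [exists a in C, prefix (rcons p b) (sigma a ++ w)]].

Definition sigmaL (G : seq {set A}) : seq {set B} :=
  [seq phiL s C | s <- TL, C <- G].
Definition sigmaR (G : seq {set A}) : seq {set B} :=
  [seq phiR p C | p <- TR, C <- G].

Definition left_valid (G' : seq {set B}) (G : seq {set A}) : Prop :=
  [/\ mc_acyclic G, mc_connected G,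
      (forall s, s \in TL -> mc_connected_on (AL s) G),
      mc_eq G' (sigmaL G) & mc_acyclic G' /\ mc_connected G'].

Definition right_valid (G' : seq {set B}) (G : seq {set A}) : Prop :=
  [/\ mc_acyclic G, mc_connected G,
      (forall p, p \in TR -> mc_connected_on (AR p) G),
      mc_eq G' (sigmaR G) & mc_acyclic G' /\ mc_connected G'].
End Sets.

From mathcomp Require Import all_boot zify.
Set Implicit Arguments. Unset Strict Implicit. Unset Printing Implicit Defensive.

(* Let v(a) be sigma(a)w (right case) or the mirror image of sigma(a) (left case).
   The return property makes the words v(a) a prefix code, and validity becomes a
   statement about this code and the set L of longest common prefixes of its
   codewords.  Acyclicity of G' puts every edge {x, y} of T' in a single clique
   phi_p(C), so it lifts to an edge {a, b} of G inside C with lcp(v a, v b) = p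
   and letters x, y after p; the lifted edges form T.  Inside a clique of an
   acyclic multigraph the spanning tree T' is itself connected, so the letters
   after p are joined by level-p edges of T'; lifting such walks and inducting on
   the depth of p shows that T is connected on every A_p.  Finally a cycle of T,
   read at its shortest level, would project to a cycle of T'. *)

Section CyclicOrdinals.
Variable n : nat.
Implicit Types k : 'I_n.+2.

Lemma val_iter_ordS j k : val (iter j (@ordS n.+2) k) = (k + j) %% n.+2.
Proof.
elim: j => [|j IH]; first by rewrite addn0 modn_small.
by rewrite iterS /= IH -addn1 modnDml addn1 addnS.
Qed.

Lemma ordS_val k : val (ordS k) = if k < n.+1 then k.+1 else 0.
Proof.
rewrite /=; case: ifPn => kn; first by rewrite modn_small.
suff -> : nat_of_ord k = n.+1 by rewrite modnn.
by apply/eqP; rewrite eqn_leq -ltnS ltn_ord leqNgt kn.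
Qed.

Lemma cycle_ind (T : Type) (P : T -> Prop) (f : 'I_n.+2 -> T) :
  (forall k, P (f k) -> P (f (ordS k))) -> forall j k, P (f j) -> P (f k).
Proof.
move=> step j k Pj.
have -> : k = iter (k + (n.+2 - j)) (@ordS n.+2) j.
  apply/val_inj; rewrite val_iter_ordS addnA addnC addnA.
  by rewrite subnK ?modnDl ?modn_small // ltnW.
by elim: (_ + _) => //= i IH; apply: step.
Qed.

Lemma iter_ordS_eq j k : (iter j (@ordS n.+2) k == k) = (n.+2 %| j).
Proof.
apply/eqP/idP => [/(congr1 val)|/eqP jn]; last first.
  by apply/val_inj; rewrite val_iter_ordS -modnDmr jn addn0 modn_small.
rewrite val_iter_ordS -[X in _ = X](modn_small (ltn_ord k)).
rewrite -[X in _ = X %% _]addn0 => /eqP.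
by rewrite eqn_modDl mod0n.
Qed.

Lemma ordS_neq k : ordS k != k.
Proof. by have := iter_ordS_eq 1 k; rewrite /= => ->; rewrite dvdn1. Qed.

Lemma ordS_involutive k : ordS (ordS k) = k -> n = 0.
Proof.
by move=> /eqP; rewrite -[ordS (ordS k)]/(iter 2 _ k) iter_ordS_eq => /dvdn_leq; lia.
Qed.

Lemma cycle_connect_but (T : finType) (e : rel T) (f : 'I_n.+2 -> T) k0 :
  (forall k, k != k0 -> connect e (f k) (f (ordS k))) -> connect e (f (ordS k0)) (f k0).
Proof.
move=> step; pose g i := iter i.+1 (@ordS n.+2) k0.
suff gi : forall i, i <= n.+1 -> connect e (f (ordS k0)) (f (g i)).
  have gk0 : g n.+1 = k0 by apply/eqP; rewrite /g iter_ordS_eq.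
  by have := gi n.+1 (leqnn _); rewrite gk0.
elim=> [|i IH] le_i //; apply: connect_trans (IH (ltnW le_i)) (step _ _).
by rewrite iter_ordS_eq; apply/negP => /dvdn_leq; lia.
Qed.

End CyclicOrdinals.

Lemma count_gt1_idx (X : Type) (d : X) (P : pred X) (s : seq X) : 1 < count P s ->
  exists i j, [/\ i < j, j < size s, P (nth d s i) & P (nth d s j)].
Proof.
elim: s => [|x s IH] //=; case: (boolP (P x)) => Px /=.
  rewrite add1n ltnS -has_count => sP.
  by exists 0, (find P s).+1; split; rewrite //= ?ltnS -?has_find ?nth_find.
by rewrite add0n => /IH[i [j [ij js Pi Pj]]]; exists i.+1, j.+1.
Qed.

Lemma seq_choice (X : eqType) (Y : Type) (dx : X) (dy : Y) (R : X -> Y -> Prop) (s : seq X) :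
  (forall x, x \in s -> exists y, R x y) ->
  exists t : seq Y, size t = size s /\ forall i, i < size s -> R (nth dx s i) (nth dy t i).
Proof.
elim: s => [|x s IH] Rs; first by exists [::].
have [y Rxy] := Rs x (mem_head x s).
have [|t [st Rt]] := IH; first by move=> x' x's; apply: Rs; rewrite inE x's orbT.
by exists (y :: t); split=> [|[|i]] /=; rewrite ?st //; apply: Rt.
Qed.

Lemma filter_allpairs_single (X : Type) (Y Z : eqType) (f : X -> Y -> Z) (P : pred Z)
    (s : seq X) (t : seq Y) (g : Y -> Z) :
  (forall y, y \in t -> filter P [seq f x y | x <- s] = [:: g y]) ->
  perm_eq (filter P [seq f x y | x <- s, y <- t]) (map g t).
Proof.
elim: t => [|y t IH] single; first by rewrite allpairs0r.
rewrite (permPl (perm_filter P (permEl (perm_allpairs_consr f s (fun=> y) (fun=> t))))).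
rewrite filter_cat single ?mem_head //= perm_cons; apply: IH => y' y't.
by apply: single; rewrite inE y't orbT.
Qed.

Section MultiCliques.
Variable V : finType.
Implicit Types (l T : seq {set V}) (C D : {set V}).

Definition mc_adj_but l h : rel V :=
  fun x y => has (fun j => [&& j != h, x \in nth set0 l j & y \in nth set0 l j])
                 (iota 0 (size l)).

Lemma mc_adj_but_in l h C x y :
  C \in l -> C != nth set0 l h -> x \in C -> y \in C -> mc_adj_but l h x y.
Proof.
move=> Cl Ch xC yC; apply/hasP; exists (index C l); first by rewrite mem_iota index_mem.
rewrite nth_index // xC yC !andbT; apply: contra Ch => /eqP <-.
by rewrite nth_index.
Qed.

(* A shortest path from u to v avoiding clique h, closed by an edge of clique h,
   is a simple cycle that is not monochromatic. *)
Lemma mc_acyclic_cut l h u v :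
  mc_acyclic l -> h < size l -> u != v -> u \in nth set0 l h -> v \in nth set0 l h ->
  ~~ connect (mc_adj_but l h) u v.
Proof.
move=> acyc hl uv uh vh; apply/negP => /connectP[p0 /shortenP[p pth up _] lastp].
case: p pth up lastp => [|x1 p] pth up lastp; first by rewrite lastp eqxx in uv.
pose vs (k : 'I_(size p).+2) := nth u [:: u, x1 & p] k.
pose Q (k : 'I_(size p).+2) j :=
  [&& j != h, vs k \in nth set0 l j & vs (ordS k) \in nth set0 l j].
pose cs (k : 'I_(size p).+2) :=
  if k < (size p).+1 then find (Q k) (iota 0 (size l)) else h.
have Qcs (k : 'I_(size p).+2) : k < (size p).+1 -> cs k < size l /\ Q k (cs k).
  move=> kp; have hasQ : has (Q k) (iota 0 (size l)).
    by move/pathP: pth => /(_ u k kp); rewrite /Q /vs ordS_val kp.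
  rewrite /cs kp; have := hasQ; rewrite has_find size_iota => csl.
  by split=> //; have := nth_find 0 hasQ; rewrite nth_iota.
have cyc : mc_cycle l vs cs.
  split; first by move=> i j /eqP; rewrite nth_uniq // => /eqP/val_inj.
  split=> [k|n0]; last by rewrite /cs ltnn; have [_ /and3P[/eqP]] := Qcs ord0 isT.
  case: (ltnP k (size p).+1) => [kp|pk]; first by have [? /and3P[]] := Qcs k kp.
  have kmax : nat_of_ord k = (size p).+1 by have := ltn_ord k; lia.
  rewrite /cs /vs ordS_val kmax ltnn /=.
  have -> : nth u (x1 :: p) (size p) = v by rewrite lastp (last_nth u).
  by split.
have := acyc _ vs cs cyc ord0 ord_max; rewrite /cs ltnn.
by have [_ /and3P[/eqP]] := Qcs ord0 isT.
Qed.

Lemma mc_acyclic_count_edge l x y : mc_acyclic l -> x != y ->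
  count (fun C => (x \in C) && (y \in C)) l <= 1.
Proof.
move=> acyc xy; rewrite leqNgt; apply/negP => /(count_gt1_idx set0)[i [j []]].
move=> ij jl /andP[xi yi] /andP[xj yj].
have := mc_acyclic_cut acyc (ltn_trans ij jl) xy xi yi; rewrite connect1 //.
by apply/hasP; exists j; rewrite ?mem_iota //= (gtn_eqF ij) xj yj.
Qed.

Definition adj_within T D : rel V :=
  fun x y => has (fun e : {set V} => [&& x \in e, y \in e & e \subset D]) T.

(* Along a walk of T from u, the first vertex of D met after leaving D cannot be
   distinct from the last one before leaving it: they would be joined outside
   clique h. *)
Lemma spanning_connect_clique l T h u v :
  mc_acyclic l -> mc_connected T -> (forall e, e \in T -> has (fun C => e \subset C) l) ->
  h < size l -> u \in nth set0 l h -> v \in nth set0 l h ->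
  connect (adj_within T (nth set0 l h)) u v.
Proof.
move=> acyc Tconn Tl hl uh vh; set D := nth set0 l h.
pose I c := exists2 p, (p \in D) && connect (adj_within T D) u p
                     & connect (mc_adj_but l h) p c.
have stuck p c : p \in D -> c \in D -> connect (mc_adj_but l h) p c -> p = c.
  move=> pD cD pc; apply/eqP/negPn/negP => /(mc_acyclic_cut acyc hl)/(_ pD cD).
  by rewrite pc.
have step c z : mc_adj T c z -> I c -> I z.
  move=> /hasP[e eT /andP[ce ze]] [p /andP[pD up] pc].
  have [eD|eD] := boolP (e \subset D).
    have pc' := stuck p c pD (subsetP eD c ce) pc; subst p.
    exists z; rewrite ?connect0 // (subsetP eD) //=.
    by apply: connect_trans up (connect1 _); apply/hasP; exists e; rewrite ?ce ?ze.
  exists p; rewrite ?pD //; apply: connect_trans pc (connect1 _).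
  have /hasP[C Cl eC] := Tl e eT.
  apply: (mc_adj_but_in Cl); rewrite ?(subsetP eC) //.
  by apply: contra eD => /eqP CD; rewrite /D -CD.
have [p /andP[pD up] pv] : I v.
  have walk q c : path (mc_adj T) c q -> I c -> I (last c q).
    by elim: q c => [|z q IH] c //= /andP[cz pth] Ic; apply: IH pth (step _ _ cz Ic).
  have /connectP[q pth ->] := Tconn u v.
  by apply: walk pth _; exists u; rewrite ?uh ?connect0.
by rewrite -(stuck p v pD vh pv).
Qed.

Lemma card_le2_third C x y z : #|C| <= 2 -> x \in C -> y \in C -> z \in C ->
  x != y -> z != x -> z = y.
Proof.
move=> C2 xC yC zC xy zx; apply/eqP/negPn/negP => zy.
suff: 2 < #|C| by rewrite ltnNge C2.
by apply/card_gt2P; exists x, y, z; rewrite [y == z]eq_sym zy.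
Qed.

(* Two edges of a cycle sharing a colour would join the same pair of vertices,
   which only happens for the cycles of length 2 excluded by [mc_cycle]. *)
Lemma mc_cycle_color_inj l n (vs : 'I_n.+2 -> V) cs :
  (forall C, C \in l -> #|C| <= 2) -> mc_cycle l vs cs -> injective cs.
Proof.
move=> l2 [vs_inj [edge n0]] k k' ckk'; apply/eqP/negPn/negP => kk'.
have [ckl [vk vSk]] := edge k; have [_ [vk' vSk']] := edge k'; rewrite -ckk' in vk' vSk'.
have C2 := l2 _ (mem_nth set0 ckl).
have vS i : vs (ordS i) != vs i by apply: contra (ordS_neq i) => /eqP/vs_inj ->.
have k'E : k' = ordS k.
  apply: (vs_inj); apply: card_le2_third C2 vk vSk vk' _ _; first by rewrite eq_sym vS.
  by apply: contra kk' => /eqP/vs_inj ->.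
have SSk : ordS (ordS k) = k.
  apply: (vs_inj); rewrite -k'E; apply: card_le2_third C2 vk' vk vSk' _ (vS k').
  by rewrite k'E vS.
have n_0 := ordS_involutive SSk; subst n; apply: n0 => //.
have [e|e] : k = ord0 \/ k = ord_max.
  by case: (k) => [[|[|m]] km]; [left|right|]; try apply/val_inj.
all: by rewrite e in ckk' k'E; rewrite ckk' k'E; congr cs; apply/val_inj.
Qed.

End MultiCliques.

Section LongestCommonPrefix.
Variables (X : eqType) (x0 : X).
Implicit Types u v p q : seq X.

Lemma prefix_size_eq p u : prefix p u -> size u <= size p -> p = u.
Proof.
move=> /prefixP[r ->]; rewrite size_cat -{2}(addn0 (size p)) leq_add2l leqn0 size_eq0.
by move/eqP ->; rewrite cats0.
Qed.

Lemma prefix_size_prefix p q u : prefix p u -> prefix q u -> size p <= size q -> prefix p q.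
Proof. by rewrite !prefixE => /eqP pu /eqP qu pq; rewrite -qu take_takel // pu. Qed.

Lemma nth_prefix p u i : prefix p u -> i < size p -> nth x0 u i = nth x0 p i.
Proof. by move=> /prefixP[r ->] ip; rewrite nth_cat ip. Qed.

Lemma prefix_rconsE p y u :
  prefix (rcons p y) u = [&& prefix p u, size p < size u & nth x0 u (size p) == y].
Proof.
elim: p u => [|c p IH] [|a u] //=; first by rewrite prefix0s andbT eq_sym.
by rewrite IH ltnS andbA.
Qed.

Lemma lcpC u v : lcp u v = lcp v u.
Proof.
elim: u v => [|a u IH] [|b v] //=; rewrite eq_sym.
by case: ifP => // /eqP ->; rewrite IH.
Qed.

Lemma lcp_prefixl u v : prefix (lcp u v) u.
Proof. elim: u v => [|a u IH] [|b v] //=; case: ifP => // _ /=; by rewrite eqxx IH. Qed.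

Lemma lcp_prefixr u v : prefix (lcp u v) v.
Proof. by rewrite lcpC lcp_prefixl. Qed.

Lemma lcp_eq p u v : prefix p u -> prefix p v -> size p < size u -> size p < size v ->
  nth x0 u (size p) != nth x0 v (size p) -> lcp u v = p.
Proof.
elim: p u v => [|c p IH] [|a u] [|b v] //=; first by case: ifP => // /eqP ->; rewrite eqxx.
by move=> /andP[/eqP <- pu] /andP[/eqP <- pv] su sv d; rewrite eqxx (IH u v).
Qed.

End LongestCommonPrefix.

Section PrefixCode.
Variables (A B : finType) (v : A -> seq B) (x0 : B) (L : seq (seq B)).
Hypothesis v_prefix_free : forall a b, prefix (v a) (v b) -> a = b.
Hypothesis v_neq0 : forall a, v a != [::].
Hypothesis L_uniq : uniq L.
Hypothesis lcp_in_L : forall a b, a != b -> lcp (v a) (v b) \in L.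

(* For v a = sigma(a)w these are A^R_{sigma,p}, phi^R_{sigma,p}, sigma^R and right
   validity, with L in the role of T^R(sigma). *)
Definition Av (p : seq B) : {set A} := [set a | prefix p (v a) && (size p < size (v a))].
Definition phiv (p : seq B) (C : {set A}) : {set B} :=
  [set b | [exists a in C, prefix (rcons p b) (v a)]].
Definition sigmav (G : seq {set A}) : seq {set B} := [seq phiv p C | p <- L, C <- G].
Definition v_valid (G' : seq {set B}) (G : seq {set A}) : Prop :=
  [/\ mc_acyclic G, mc_connected G,
      (forall p, p \in L -> mc_connected_on (Av p) G),
      mc_eq G' (sigmav G) & mc_acyclic G' /\ mc_connected G'].
Definition letter (a : A) (p : seq B) := nth x0 (v a) (size p).

Lemma in_phiv y p C : (y \in phiv p C) = [exists a in C, (a \in Av p) && (letter a p == y)].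
Proof.
rewrite inE; apply: eq_existsb => a; rewrite (prefix_rconsE x0) inE /letter.
by case: (a \in C); rewrite //= andbA.
Qed.

Lemma lcp_Av a b p : a \in Av p -> b \in Av p -> letter a p != letter b p ->
  lcp (v a) (v b) = p.
Proof. by rewrite !inE => /andP[pa sa] /andP[pb sb]; apply: lcp_eq. Qed.

Lemma Av_rcons_letter a b p : a \in Av p -> b \in Av p -> letter a p = letter b p ->
  a != b -> a \in Av (rcons p (letter a p)) /\ b \in Av (rcons p (letter a p)).
Proof.
move=> aP bP ab_letter ab.
have pref c : c \in Av p -> letter c p = letter a p -> prefix (rcons p (letter a p)) (v c).
  by rewrite inE (prefix_rconsE x0) => /andP[-> ->] <-; rewrite eqxx.
have [pa pb] := (pref a aP erefl, pref b bP (esym ab_letter)).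
have long c d : prefix (rcons p (letter a p)) (v c) -> prefix (rcons p (letter a p)) (v d) ->
    c != d -> c \in Av (rcons p (letter a p)).
  move=> pc pd cd; rewrite inE pc ltn_neqAle size_prefix // andbT.
  apply: contra cd => /eqP s_eq; have e := prefix_size_eq pc (eq_leq (esym s_eq)).
  by rewrite (v_prefix_free (_ : prefix (v c) (v d))) // -e.
by split; [apply: long pa pb ab | apply: long pb pa _; rewrite eq_sym].
Qed.

Lemma Av_rcons_sub p y : Av (rcons p y) \subset Av p.
Proof.
apply/subsetP => a; rewrite !inE (prefix_rconsE x0).
by case/andP => /and3P[-> ps _] _; rewrite ps.
Qed.

Lemma letter_prefix a p q : a \in Av q -> prefix p q -> size p < size q ->
  letter a p = nth x0 q (size p).
Proof. by rewrite inE => /andP[qa _] pq sp; rewrite /letter (nth_prefix _ qa). Qed.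

Lemma count_sigmav_gt1 G (P : pred {set B}) p q C D :
  p \in L -> q \in L -> p != q -> C \in G -> D \in G -> P (phiv p C) -> P (phiv q D) ->
  1 < count P (sigmav G).
Proof.
move=> pL qL pq CG DG PC PD.
have qr : q \in rem p L by rewrite mem_rem_uniq // inE eq_sym pq qL.
have pqL : perm_eq L (p :: q :: rem q (rem p L)).
  by apply: perm_trans (perm_to_rem pL) _; rewrite perm_cons perm_to_rem.
rewrite /sigmav (permP (perm_allpairs _ pqL (perm_refl G))) /= !count_cat addnA.
rewrite (leq_trans _ (leq_addr _ _)) // -(addn1 1) leq_add // -has_count.
  by apply/hasP; exists (phiv p C); rewrite ?map_f.
by apply/hasP; exists (phiv q D); rewrite ?map_f.
Qed.

Section Lift.
Variables (G : seq {set A}) (Gp Tp : seq {set B}).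
Hypothesis G_valid : v_valid Gp G.
Hypothesis Tp_spanning : spanning_tree Tp Gp.

Definition lifts (e : {set B}) (t : seq B * A * A) : Prop :=
  let: (p, a, b) := t in
  [/\ p \in L, exists2 C, C \in G & (a \in C) && (b \in C),
      (a \in Av p) && (b \in Av p), letter a p != letter b p &
      e = [set letter a p; letter b p]].

Lemma phiv_in_Gp p C : p \in L -> C \in G -> 1 < #|phiv p C| -> phiv p C \in Gp.
Proof.
case: G_valid => _ _ _ eqG _ pL CG big.
have : phiv p C \in [seq D <- sigmav G | 1 < #|(D : {set B})|].
  by rewrite mem_filter big allpairs_f.
by rewrite -(perm_mem eqG) mem_filter => /andP[].
Qed.

Lemma Tp_pair e : e \in Tp -> exists x y, x != y /\ e = [set x; y].
Proof. by case: Tp_spanning => [[Tp2 _] _] eT; apply/cards2P; apply: (allP Tp2). Qed.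

Lemma lifts_exist e : e \in Tp -> exists t, lifts e t.
Proof.
case: G_valid => _ _ _ eqG _; case: Tp_spanning => [_ TpGp] eT.
have /hasP[D DGp eD] := TpGp e eT.
have [x [y [xy exy]]] := Tp_pair eT.
have : D \in [seq C <- Gp | 1 < #|(C : {set B})|].
  by rewrite mem_filter DGp (leq_trans _ (subset_leq_card eD)) // exy cards2 xy.
rewrite (perm_mem eqG) mem_filter => /andP[_ /allpairsP[[p C] [/= pL CG DE]]].
have : x \in D by apply: (subsetP eD); rewrite exy set21.
have : y \in D by apply: (subsetP eD); rewrite exy set22.
rewrite DE !in_phiv => /exists_inP[b bC /andP[bP /eqP by_]].
move=> /exists_inP[a aC /andP[aP /eqP ax]]; rewrite -ax -by_ in xy exy.
by exists (p, a, b); split; rewrite ?aP ?bP //; exists C; rewrite ?aC ?bC.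
Qed.

Variable a0 : A.
Variable tl : seq (seq B * A * A).
Hypothesis tl_size : size tl = size Tp.
Hypothesis tl_lifts : forall i, i < size Tp -> lifts (nth set0 Tp i) (nth ([::], a0, a0) tl i).

Definition lev i := (nth ([::], a0, a0) tl i).1.1.
Definition la i := (nth ([::], a0, a0) tl i).1.2.
Definition lb i := (nth ([::], a0, a0) tl i).2.
Definition T : seq {set A} := [seq [set t.1.2; t.2] | t <- tl].

Lemma size_T : size T = size Tp.
Proof. by rewrite size_map tl_size. Qed.

Lemma nth_T i : i < size Tp -> nth set0 T i = [set la i; lb i].
Proof. by move=> iT; rewrite (nth_map ([::], a0, a0)) // tl_size. Qed.

Lemma liftP i : i < size Tp ->
  [/\ lev i \in L, exists2 C, C \in G & (la i \in C) && (lb i \in C),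
      (la i \in Av (lev i)) && (lb i \in Av (lev i)),
      letter (la i) (lev i) != letter (lb i) (lev i) &
      nth set0 Tp i = [set letter (la i) (lev i); letter (lb i) (lev i)]].
Proof. by move/tl_lifts; rewrite /lev /la /lb; case: (nth _ tl i) => [[p a] b]. Qed.

Lemma lev_unique i q C : i < size Tp -> q \in L -> C \in G ->
  nth set0 Tp i \subset phiv q C -> q = lev i.
Proof.
move=> iT qL CG e_sub; apply/eqP/negPn/negP => q_lev.
case: G_valid => _ _ _ eqG [Gp_acyc _].
have [levL [Ci CiG /andP[laC lbC]] /andP[laP lbP] _ Ei] := liftP iT.
have [x [y [xy Exy]]] := Tp_pair (mem_nth set0 iT).
pose P (D : {set B}) := (x \in D) && (y \in D).
have PD (D : {set B}) : (nth set0 Tp i \subset D) = P D.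
  by rewrite Exy subUset !sub1set.
have P_big (D : {set B}) : P D -> 1 < #|D|.
  by rewrite -PD => /subset_leq_card; apply: leq_trans; rewrite Exy cards2 xy.
have count_sigma : 1 < count P (sigmav G).
  apply: (count_sigmav_gt1 levL qL _ CiG CG).
  - by rewrite eq_sym.
  - rewrite -PD Ei; apply/subsetP => z /set2P[]->; rewrite in_phiv; apply/exists_inP.
      by exists (la i); rewrite ?laP ?eqxx.
    by exists (lb i); rewrite ?lbP ?eqxx.
  - by rewrite -PD.
have := mc_acyclic_count_edge Gp_acyc xy; rewrite leqNgt.
have drop_small s : count P [seq D <- s | 1 < #|(D : {set B})|] = count P s.
  by rewrite count_filter; apply: eq_count => D /=; apply/andb_idr/P_big.
by rewrite -drop_small (permP eqG) drop_small count_sigma.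
Qed.

Definition Tp_adj_at p : rel B := fun x y =>
  has (fun i => [&& lev i == p, x \in nth set0 Tp i & y \in nth set0 Tp i])
      (iota 0 (size Tp)).

Lemma lev_connect p a b : p \in L -> a \in Av p -> b \in Av p ->
  connect (Tp_adj_at p) (letter a p) (letter b p).
Proof.
move=> pL aP bP.
case: G_valid => _ _ G_conn_on _ [Gp_acyc _]; case: Tp_spanning => [[_ [_ Tp_conn]] TpGp].
have step c d : [&& c \in Av p, d \in Av p & mc_adj G c d] ->
    connect (Tp_adj_at p) (letter c p) (letter d p).
  move=> /and3P[cP dP /hasP[C CG /andP[cC dC]]].
  have [->|cd] := eqVneq (letter c p) (letter d p); first exact: connect0.
  have cD : letter c p \in phiv p C.
    by rewrite in_phiv; apply/exists_inP; exists c; rewrite ?cP ?eqxx.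
  have dD : letter d p \in phiv p C.
    by rewrite in_phiv; apply/exists_inP; exists d; rewrite ?dP ?eqxx.
  have DGp : phiv p C \in Gp.
    by apply: phiv_in_Gp => //; apply/card_gt1P; exists (letter c p), (letter d p).
  have DGp' : index (phiv p C) Gp < size Gp by rewrite index_mem.
  have := spanning_connect_clique Gp_acyc Tp_conn TpGp DGp'.
  rewrite nth_index // => /(_ _ _ cD dD).
  apply: connect_sub => x y /hasP[e eT /and3P[xe ye eD]]; apply: connect1.
  apply/hasP; exists (index e Tp); first by rewrite mem_iota index_mem.
  have -> : lev (index e Tp) = p.
    by symmetry; apply: (@lev_unique _ p C); rewrite ?index_mem ?nth_index.
  by rewrite nth_index // xe ye eqxx.
have /connectP[q pth ->] := G_conn_on p pL a b aP bP.
elim: q a pth {aP} => [|c q IH] a //= /andP[ac pth].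
exact: connect_trans (step _ _ ac) (IH _ pth).
Qed.

Definition T_adj_on p : rel A := fun x y => [&& x \in Av p, y \in Av p & mc_adj T x y].

Lemma lifted_edge_adj i : i < size Tp -> mc_adj T (la i) (lb i) /\ mc_adj T (lb i) (la i).
Proof.
move=> iT; have iT' : nth set0 T i \in T by rewrite mem_nth // size_T.
by split; apply/hasP; exists (nth set0 T i); rewrite // nth_T // set21 set22.
Qed.

(* Codewords with different letters at p are linked by lifting a walk of level-p
   edges of Tp. *)
Lemma T_connect_letters p :
  (forall c d, c \in Av p -> d \in Av p -> letter c p = letter d p ->
     connect (T_adj_on p) c d) ->
  mc_connected_on (Av p) T.
Proof.
move=> same a b aP bP.
have [/same|ab] := eqVneq (letter a p) (letter b p); first exact.
have pL : p \in L.
  by rewrite -(lcp_Av aP bP ab) lcp_in_L //; apply: contra ab => /eqP ->.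
pose J y := forall c, c \in Av p -> letter c p = y -> connect (T_adj_on p) a c.
have step y z : Tp_adj_at p y z -> J y -> J z.
  move=> /hasP[i iI /and3P[/eqP li yi zi]] Jy c cP cz.
  have iT : i < size Tp by rewrite mem_iota in iI.
  have [_ _ /andP[laP lbP] _ Ei] := liftP iT; rewrite li in laP lbP Ei.
  have [e1 e2] := lifted_edge_adj iT.
  have [ca cb] : connect (T_adj_on p) a (la i) /\ connect (T_adj_on p) a (lb i).
    move: yi; rewrite Ei => /set2P[] ye.
      have h := Jy _ laP (esym ye); split=> //.
      by apply: connect_trans h (connect1 _); rewrite /T_adj_on laP lbP e1.
    have h := Jy _ lbP (esym ye); split=> //.
    by apply: connect_trans h (connect1 _); rewrite /T_adj_on laP lbP e2.
  move: zi; rewrite Ei => /set2P[] ze.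
    by apply: connect_trans ca (same _ _ laP cP _); rewrite cz.
  by apply: connect_trans cb (same _ _ lbP cP _); rewrite cz.
have /connectP[q pth lq] := lev_connect pL aP bP.
have walk r y : path (Tp_adj_at p) y r -> J y -> J (last y r).
  by elim: r y => [|z r IH] y //= /andP[yz pth'] Jy; apply: IH pth' (step _ _ yz Jy).
by apply: (walk _ _ pth _ b bP lq) => c cP ca; apply: same aP cP (esym ca).
Qed.

Lemma T_connected_on p : mc_connected_on (Av p) T.
Proof.
pose M := \max_(c : A) size (v c).
have leM c : size (v c) <= M by apply: (@leq_bigmax _ (fun c => size (v c))).
move: {2}(M - size p) (leqnn (M - size p)) => n; elim: n p => [|n IH] p hp.
  move=> a b; rewrite inE => /andP[_ sa]; move: hp.
  by rewrite leqn0 subn_eq0 leqNgt (leq_trans sa (leM a)).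
apply: T_connect_letters => c d cP dP e.
have [->|cd] := eqVneq c d; first exact: connect0.
have [c' d'] := Av_rcons_letter cP dP e cd.
have hp' : M - size (rcons p (letter c p)) <= n.
  by rewrite size_rcons subnS -subn1 leq_subLR add1n.
apply: connect_sub (IH _ hp' c d c' d') => x y /and3P[xP yP xy]; apply: connect1.
by rewrite /T_adj_on xy (subsetP (Av_rcons_sub _ _) x xP) (subsetP (Av_rcons_sub _ _) y yP).
Qed.

Lemma T_edge_lift i x y : i < size Tp -> x \in nth set0 T i -> y \in nth set0 T i -> x != y ->
  [/\ lcp (v x) (v y) = lev i, x \in Av (lev i), y \in Av (lev i),
      letter x (lev i) != letter y (lev i) &
      nth set0 Tp i = [set letter x (lev i); letter y (lev i)]].
Proof.
move=> iT; have [_ _ /andP[laP lbP] ab Ei] := liftP iT.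
rewrite nth_T // => /set2P[]-> /set2P[]->; rewrite ?eqxx // => _.
  by split=> //; apply: lcp_Av.
split; rewrite 1?eq_sym 1?setUC //.
by rewrite lcpC; apply: lcp_Av; rewrite // eq_sym.
Qed.

Lemma T_card_le2 C : C \in T -> #|C| <= 2.
Proof. by case/mapP=> t _ ->; rewrite cards2; case: (_ != _). Qed.

(* Let s be a level of minimal length on a cycle of T.  All codewords of the
   cycle extend s, the edges at level s become edges of Tp and the other edges
   keep the letter at s, so the letters at s trace a cycle in the tree Tp. *)
Lemma T_acyclic : mc_acyclic T.
Proof.
move=> n vs cs cyc; exfalso.
case: Tp_spanning => [[_ [Tp_acyc _]] _]; have [vs_inj [edge _]] := cyc.
have cs_inj := mc_cycle_color_inj T_card_le2 cyc.
have E k : cs k < size Tp /\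
    [/\ lcp (v (vs k)) (v (vs (ordS k))) = lev (cs k), vs k \in Av (lev (cs k)),
        vs (ordS k) \in Av (lev (cs k)),
        letter (vs k) (lev (cs k)) != letter (vs (ordS k)) (lev (cs k)) &
        nth set0 Tp (cs k) =
          [set letter (vs k) (lev (cs k)); letter (vs (ordS k)) (lev (cs k))]].
  have [ck [vk vSk]] := edge k; rewrite size_T in ck; split=> //.
  by apply: T_edge_lift => //; rewrite (inj_eq vs_inj) eq_sym ordS_neq.
have [k0 _ k0_min] := @arg_minnP _ ord0 xpredT (fun k => size (lev (cs k))) erefl.
set s := lev (cs k0) in k0_min.
have s_lev k : prefix s (v (vs k)) -> prefix s (lev (cs k)).
  have [_ [lcpE _ _ _ _]] := E k; rewrite -lcpE => sk.
  by apply: prefix_size_prefix sk (lcp_prefixl _ _) _; rewrite lcpE k0_min.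
have pref k : prefix s (v (vs k)).
  apply: (@cycle_ind n _ (fun a => prefix s (v a)) vs _ k0).
    move=> i si; have [_ [lcpE _ _ _ _]] := E i.
    by apply: prefix_trans (s_lev i si) _; rewrite -lcpE lcp_prefixr.
  by rewrite /s; have [_ [<- _ _ _ _]] := E k0; apply: lcp_prefixl.
have step k : k != k0 ->
    connect (mc_adj_but Tp (cs k0)) (letter (vs k) s) (letter (vs (ordS k)) s).
  move=> kk0; have [ck [_ vkP vSkP _ Ek]] := E k; have sk := s_lev k (pref k).
  have [lev_s|lev_s] := eqVneq (lev (cs k)) s.
    apply: connect1; apply/hasP; exists (cs k); first by rewrite mem_iota.
    by rewrite (inj_eq cs_inj) kk0 Ek lev_s set21 set22.
  have ss : size s < size (lev (cs k)).
    rewrite ltn_neqAle size_prefix // andbT; apply: contra lev_s => /eqP e.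
    by rewrite (prefix_size_eq sk) // e.
  by rewrite (letter_prefix vkP sk ss) (letter_prefix vSkP sk ss).
have [ck0 [_ _ _ dif Ek0]] := E k0.
have := @mc_acyclic_cut _ _ _ (letter (vs (ordS k0)) s) (letter (vs k0) s) Tp_acyc ck0.
rewrite eq_sym dif Ek0 set21 set22 => /(_ isT isT isT).
by rewrite (@cycle_connect_but n _ _ (fun k => letter (vs k) s)).
Qed.

Lemma phiv_lifted_edge i : i < size Tp -> phiv (lev i) [set la i; lb i] = nth set0 Tp i.
Proof.
move=> iT; have [_ _ /andP[laP lbP] _ Ei] := liftP iT; rewrite Ei.
apply/setP => y; rewrite in_phiv; apply/exists_inP/set2P.
  by move=> [a /set2P[]-> /andP[_ /eqP ->]]; [left | right].
by case=> ->; [exists (la i) | exists (lb i)]; rewrite ?set21 ?set22 ?laP ?lbP ?eqxx.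
Qed.

Lemma phiv_lifted_edge_big i p : i < size Tp ->
  (1 < #|phiv p [set la i; lb i]|) = (p == lev i).
Proof.
move=> iT; have [_ _ /andP[laP lbP] dif Ei] := liftP iT.
apply/idP/eqP => [|->]; last by rewrite phiv_lifted_edge // Ei cards2 dif.
case/card_gt1P => y1 [y2 [+ + y12]]; rewrite !in_phiv.
move=> /exists_inP[a1 a1s /andP[a1P /eqP e1]] /exists_inP[a2 a2s /andP[a2P /eqP e2]].
have dl : letter a1 p != letter a2 p by rewrite e1 e2.
have a12 : a1 != a2 by apply: contra dl => /eqP ->.
have := lcp_Av a1P a2P dl; have := lcp_Av laP lbP dif.
move: a1s a2s a12 => /set2P[]-> /set2P[]->; rewrite ?eqxx // => _ <- //.
by rewrite lcpC.
Qed.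

Lemma T_eq : mc_eq Tp (sigmav T).
Proof.
rewrite /mc_eq perm_sym; have -> : [seq C <- Tp | 1 < #|(C : {set B})|] = Tp.
  apply/all_filterP/allP => e eT.
  by have [x [y [xy ->]]] := Tp_pair eT; rewrite cards2 xy.
have -> : sigmav T = [seq phiv p (nth set0 T i) | p <- L, i <- iota 0 (size Tp)].
  by rewrite /sigmav -{1}(mkseq_nth set0 T) size_T /mkseq allpairs_mapr.
rewrite -{2}(mkseq_nth set0 Tp); apply: filter_allpairs_single => i.
rewrite mem_iota /= => iT; rewrite filter_map nth_T //.
rewrite (eq_in_filter (a2 := pred1 (lev i))) => [|p _]; last exact: phiv_lifted_edge_big.
by have [levL _ _ _ _] := liftP iT; rewrite filter_pred1_uniq //= phiv_lifted_edge.
Qed.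

Lemma T_spanning_valid : spanning_tree T G /\ v_valid Tp T.
Proof.
case: Tp_spanning => [[_ [Tp_acyc Tp_conn]] _].
have T_conn : mc_connected T.
  have Av0 a : a \in Av [::] by rewrite inE prefix0s /= lt0n size_eq0 v_neq0.
  move=> a b; apply: connect_sub (T_connected_on (Av0 a) (Av0 b)) => x y /and3P[_ _].
  exact: connect1.
have T_edges C : C \in T -> exists2 i, i < size Tp & C = [set la i; lb i].
  by case/(nthP set0) => i; rewrite size_T => iT <-; exists i; rewrite // nth_T.
split; last by split=> //; [apply: T_acyclic | move=> p _; apply: T_connected_on | apply: T_eq].
split; last first.
  move=> C /T_edges[i iT ->]; have [_ [Ci CiG /andP[laC lbC]] _ _ _] := liftP iT.
  by apply/hasP; exists Ci => //; apply/subsetP => z /set2P[]->.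
split; last by split; [apply: T_acyclic | apply: T_conn].
apply/allP => C /T_edges[i iT ->]; rewrite cards2.
suff -> : la i != lb i by [].
by have [_ _ _ dif _] := liftP iT; apply: contra dif => /eqP ->.
Qed.

End Lift.

Lemma v_valid_lift G Gp Tp : v_valid Gp G -> spanning_tree Tp Gp ->
  exists T, spanning_tree T G /\ v_valid Tp T.
Proof.
move=> G_valid Tp_spanning.
case: (pickP (fun _ : A => true)) => [a0 _|A0].
  have [tl [tl_size tl_lifts]] :=
    seq_choice set0 ([::], a0, a0) (lifts_exist G_valid Tp_spanning).
  by exists (T tl); apply: (T_spanning_valid G_valid Tp_spanning tl_size tl_lifts).
have Tp0 : Tp = [::].
  case: Tp Tp_spanning => // e Tp' Tp_spanning.
  have [[[p a] b] [_ [C _ /andP[aC _]] _ _ _]] :=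
    lifts_exist G_valid Tp_spanning (mem_head _ _).
  by have := A0 a.
have Tp_conn : mc_connected Tp by case: Tp_spanning => [[_ []]].
have nil_acyclic (V : finType) : mc_acyclic ([::] : seq {set V}).
  by move=> n vs cs [_ [/(_ ord0)[]]].
have noA (a : A) : False by have := A0 a.
exists [::]; subst Tp; split; first by split=> //; split=> //; split=> // a; case: (noA a).
split=> //; last by rewrite /mc_eq /sigmav allpairs0r.
by move=> p _ a; case: (noA a).
Qed.

End PrefixCode.

Section LeftByReversal.
Variables (A B : finType) (sigma : A -> seq B).

Let rsigma a := rev (sigma a).

Lemma AL_rev s : AL sigma s = Av rsigma (rev s).
Proof. by apply/setP => a; rewrite !inE /suffix !size_rev. Qed.

Lemma sigmaL_rev G : sigmaL sigma G = sigmav rsigma (map rev (TL sigma)) G.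
Proof.
rewrite /sigmav allpairs_mapl; apply: eq_allpairs => s C.
by apply/setP => b; rewrite !inE; apply: eq_existsb => a; rewrite /suffix rev_cons.
Qed.

Lemma left_valid_rev G' G : left_valid sigma G' G <-> v_valid rsigma (map rev (TL sigma)) G' G.
Proof.
rewrite /left_valid /v_valid sigmaL_rev; split; case=> h1 h2 h3 h4 h5; split => //.
  by move=> p /mapP[s sT ->]; rewrite -AL_rev; apply: h3.
by move=> s sT; rewrite AL_rev; apply: h3; apply: map_f.
Qed.

End LeftByReversal.

Lemma mem_undup_pairs (X : finType) (Y : eqType) (g : X -> X -> Y) a b : a != b ->
  g a b \in undup [seq g p.1 p.2 | p in [pred p : X * X | p.1 != p.2]].
Proof.
by move=> ab; rewrite mem_undup; apply: (@image_f _ _ (fun p => g p.1 p.2) _ (a, b)).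
Qed.

Section ReturnMorphism.
Variables (A B : finType) (sigma : A -> seq B) (w : seq B).
Hypothesis sigma_return : return_morphism sigma w.

Lemma return_morphism_inj : injective sigma.
Proof.
case: sigma_return => _ [morph_inj _] a b e.
have : morph sigma [:: a] = morph sigma [:: b] by rewrite /morph /= e.
by move/morph_inj => [].
Qed.

Lemma mem_occurrences i x : size w <= size x -> i <= size x - size w ->
  take (size w) (drop i x) = w -> i \in occurrences w x.
Proof.
move=> wx ix wi; rewrite /occurrences mem_filter mem_iota wx wi eqxx /=.
by rewrite add0n ltnS ix.
Qed.

Lemma take_return_word a : take (size w) (sigma a ++ w) = w.
Proof.
case: sigma_return => _ [_ [_ occ]].
have : 0 \in occurrences w (sigma a ++ w) by rewrite occ mem_head.
by rewrite /occurrences mem_filter drop0 => /andP[/andP[_ /eqP ->] _].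
Qed.

(* [sigma b = u ++ sigma a] puts an occurrence of w at position |u| of sigma(b) w. *)
Lemma return_morphism_suffix_free a b : suffix (sigma a) (sigma b) -> a = b.
Proof.
case: sigma_return => _ [_ [ne occ]] /suffixP[u eb].
have : size u \in occurrences w (sigma b ++ w).
  apply: mem_occurrences; rewrite ?eb ?size_cat.
  - by rewrite leq_addl.
  - by rewrite addnK leq_addr.
  by rewrite -catA drop_size_cat // take_return_word.
rewrite occ !inE eb size_cat => /orP[|] /eqP.
  by move/eqP; rewrite size_eq0 => /eqP u0; apply: return_morphism_inj; rewrite eb u0.
by move/eqP; rewrite -{1}[size u]addn0 eqn_add2l eq_sym size_eq0 (negbTE (ne a)).
Qed.

Lemma return_morphism_prefix_free a b : prefix (sigma a ++ w) (sigma b ++ w) -> a = b.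
Proof.
case: sigma_return => _ [_ [ne occ]] pr.
have [lt|ge] := ltnP (size (sigma a)) (size (sigma b)).
  move: pr => /prefixP[r er].
  have : size (sigma a) \in occurrences w (sigma b ++ w).
    apply: mem_occurrences; rewrite ?er ?size_cat.
    - by rewrite -addnA addnCA leq_addr.
    - by rewrite addnAC addnK leq_addr.
    by rewrite -catA drop_size_cat // take_size_cat.
  rewrite occ !inE => /orP[/eqP|/eqP sab]; last by move: lt; rewrite sab ltnn.
  by move/eqP; rewrite size_eq0 (negbTE (ne a)).
have := size_prefix pr; rewrite !size_cat leq_add2r => le.
have := prefix_size_eq pr; rewrite !size_cat leq_add2r ge => /(_ isT) /eqP.
have es : size (sigma a) = size (sigma b) by apply/eqP; rewrite eqn_leq le ge.
by rewrite eqseq_cat // => /andP[/eqP /return_morphism_inj].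
Qed.

Lemma right_valid_lift G' G : right_valid sigma w G' G ->
  forall T', spanning_tree T' G' -> exists T, spanning_tree T G /\ right_valid sigma w T' T.
Proof.
have [w_neq0 [_ [sigma_neq0 _]]] := sigma_return.
have [x0 _] : exists x : B, true by case: (w) w_neq0 => [|x _] //; exists x.
move=> G_valid T' T'_spanning; apply: (v_valid_lift x0) G_valid T'_spanning.
- exact: return_morphism_prefix_free.
- by move=> a; rewrite -size_eq0 size_cat addn_eq0 !size_eq0 (negbTE (sigma_neq0 a)).
- exact: undup_uniq.
- by move=> a b ab; exact: (mem_undup_pairs (fun a b => lcp (sigma a ++ w) (sigma b ++ w)) ab).
Qed.

Lemma left_valid_lift G' G : left_valid sigma G' G ->
  forall T', spanning_tree T' G' -> exists T, spanning_tree T G /\ left_valid sigma T' T.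
Proof.
move=> /left_valid_rev G_valid T' T'_spanning.
have [w_neq0 [_ [sigma_neq0 _]]] := sigma_return.
have [x0 _] : exists x : B, true by case: (w) w_neq0 => [|x _] //; exists x.
have [||||T [T_spanning /left_valid_rev]] := v_valid_lift x0 _ _ _ _ G_valid T'_spanning.
- by move=> a b; rewrite prefix_rev => /return_morphism_suffix_free.
- by move=> a; rewrite -size_eq0 size_rev size_eq0 sigma_neq0.
- by rewrite (map_inj_uniq (can_inj (@revK _))) undup_uniq.
- move=> a b ab; rewrite -[lcp _ _]revK; apply: map_f.
  exact: (mem_undup_pairs (fun a b => lcs (sigma a) (sigma b)) ab).
by exists T.
Qed.

End ReturnMorphism.

Theorem mainTheorem11 (A B : finType) (sigma : A -> seq B) (w : seq B) :
  return_morphism sigma w ->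
  (forall w' : seq B, return_morphism sigma w' -> size w' <= size w) ->
  (forall (G' : seq {set B}) (G : seq {set A}),
     left_valid sigma G' G ->
     forall T' : seq {set B}, spanning_tree T' G' ->
       exists T : seq {set A}, spanning_tree T G /\ left_valid sigma T' T) /\
  (forall (G' : seq {set B}) (G : seq {set A}),
     right_valid sigma w G' G ->
     forall T' : seq {set B}, spanning_tree T' G' ->
       exists T : seq {set A}, spanning_tree T G /\ right_valid sigma w T' T).
Proof.
move=> sigma_return _.
split=> G' G; first by apply: (left_valid_lift sigma_return).
by apply: (right_valid_lift sigma_return).
Qed.
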